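(* Let $F\colon\mathbb{A}\to\mathbb{B}$ be a double functor between double categories. Then $F$ is a double fibration if and only if both 2-functors $\mathbf{H}F\colon\mathbf{H}\mathbb{A}\to\mathbf{H}\mathbb{B}$ and $\mathcal{V}F\colon\mathcal{V}\mathbb{A}\to\mathcal{V}\mathbb{B}$ are Lack fibrations.
   Context: A double category has objects, horizontal morphisms, vertical morphisms and squares; a square $\alpha\colon(u\,{}^{a}_{b}\,v)$ has top horizontal boundary $a\colon A\to B$, bottom horizontal boundary $b\colon A'\to B'$, left vertical boundary $u\colon A\to A'$ and right vertical boundary $v\colon B\to B'$; compositions are strictly associative and unital and satisfy interchange; $e_A$ is the vertical identity on $A$; a square is vertically invertible if it is invertible for vertical composition. $\mathbf{H}\mathbb{A}$ is the underlying horizontal 2-category of $\mathbb{A}$: objects and horizontal morphisms of $\mathbb{A}$, and as 2-cells $a\Rightarrow b$ the squares $(e_A\,{}^{a}_{b}\,e_B)$. $\mathcal{V}\mathbb{A}$ is the 2-category whose objects are vertical morphisms $u\colon A\to A'$ of $\mathbb{A}$, whose morphisms $u\to v$ are squares with left boundary $u$ and right boundary $v$ (composed horizontally), and whose 2-cells from $\alpha\colon(u\,{}^{a}_{b}\,v)$ to $\beta\colon(u\,{}^{c}_{d}\,v)$ are pairs of squares $\sigma_0\colon(e_A\,{}^{a}_{c}\,e_B)$, $\sigma_1\colon(e_{A'}\,{}^{b}_{d}\,e_{B'})$ such that $\sigma_0$ vertically composed on top of $\beta$ equals $\alpha$ vertically composed on top of $\sigma_1$. A horizontal morphism is a horizontal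 equivalence if it is an equivalence in $\mathbf{H}\mathbb{A}$; a square is weakly horizontally invertible if it is an equivalence in $\mathcal{V}\mathbb{A}$. A 2-functor $G\colon\mathcal{A}\to\mathcal{B}$ is a Lack fibration if (f1) for every equivalence $b\colon B\to GC$ in $\mathcal{B}$ there is an equivalence $a\colon A\to C$ in $\mathcal{A}$ with $Ga=b$; (f2) for every morphism $c\colon A\to C$ in $\mathcal{A}$ and invertible 2-cell $\beta\colon b\cong Gc$ in $\mathcal{B}$ there is an invertible 2-cell $\alpha\colon a\cong c$ in $\mathcal{A}$ with $G\alpha=\beta$. A double functor $F\colon\mathbb{A}\to\mathbb{B}$ is a double fibration if (df1) for every horizontal equivalence $b\colon B\to FC$ in $\mathbb{B}$ there is a horizontal equivalence $a\colon A\to C$ in $\mathbb{A}$ with $Fa=b$; (df2) for every horizontal morphism $c\colon A\to C$ in $\mathbb{A}$ and every vertically invertible square $\beta\colon(e_{FA}\,{}^{b}_{Fc}\,e_{FC})$ in $\mathbb{B}$ there is a vertically invertible square $\alpha\colon(e_A\,{}^{a}_{c}\,e_C)$ in $\mathbb{A}$ with $F\alpha=\beta$; (df3) for every vertical morphism $u'\colon C\to C'$ in $\mathbb{A}$ and every weakly horizontally invertible square $\beta$ in $\mathbb{B}$ with right boundary $Fu'$ (and some left boundary $v\colon B\to B'$), there is a weakly horizontally invertible square $\alpha$ in $\mathbb{A}$ with right boundary $u'$ and $F\alpha=\beta$. *)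

From Stdlib Require Import ProofIrrelevance.

Set Implicit Arguments.
Unset Strict Implicit.

(* Strict double categories.  Composition is written in diagrammatic order:  *)
(* [hcomp f g] is "f then g".  Composition operations are total functions;   *)
(* all axioms only constrain composable pairs, so values on non-composable    *)
(* pairs are irrelevant junk (every double category in the usual sense is     *)
(* represented, and all notions below only use composable pairs).            *)

Record DoubleCat : Type := {
  ob : Type;
  hom : Type; hsrc : hom -> ob; htgt : hom -> ob;
  hid : ob -> hom; hcomp : hom -> hom -> hom;
  ver : Type; vsrc : ver -> ob; vtgt : ver -> ob;
  vid : ob -> ver; vcomp : ver -> ver -> ver;
  sq : Type; stop : sq -> hom; sbot : sq -> hom; slft : sq -> ver; srgt : sq -> ver;
  sq_hid : ver -> sq;
  sq_vid : hom -> sq;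
  sq_hcomp : sq -> sq -> sq;
  sq_vcomp : sq -> sq -> sq;  (* vertical composition: sq_vcomp a b = a on top of b *)

  hsrc_hid : forall X, hsrc (hid X) = X;
  htgt_hid : forall X, htgt (hid X) = X;
  hsrc_hcomp : forall f g, htgt f = hsrc g -> hsrc (hcomp f g) = hsrc f;
  htgt_hcomp : forall f g, htgt f = hsrc g -> htgt (hcomp f g) = htgt g;
  hcomp_id_l : forall f, hcomp (hid (hsrc f)) f = f;
  hcomp_id_r : forall f, hcomp f (hid (htgt f)) = f;
  hcomp_assoc : forall f g h, htgt f = hsrc g -> htgt g = hsrc h ->
      hcomp (hcomp f g) h = hcomp f (hcomp g h);
  vsrc_vid : forall X, vsrc (vid X) = X;
  vtgt_vid : forall X, vtgt (vid X) = X;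
  vsrc_vcomp : forall u v, vtgt u = vsrc v -> vsrc (vcomp u v) = vsrc u;
  vtgt_vcomp : forall u v, vtgt u = vsrc v -> vtgt (vcomp u v) = vtgt v;
  vcomp_id_l : forall u, vcomp (vid (vsrc u)) u = u;
  vcomp_id_r : forall u, vcomp u (vid (vtgt u)) = u;
  vcomp_assoc : forall u v w, vtgt u = vsrc v -> vtgt v = vsrc w ->
      vcomp (vcomp u v) w = vcomp u (vcomp v w);
  stop_hsrc : forall a, hsrc (stop a) = vsrc (slft a);
  stop_htgt : forall a, htgt (stop a) = vsrc (srgt a);
  sbot_hsrc : forall a, hsrc (sbot a) = vtgt (slft a);
  sbot_htgt : forall a, htgt (sbot a) = vtgt (srgt a);
  sq_hid_top : forall u, stop (sq_hid u) = hid (vsrc u);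
  sq_hid_bot : forall u, sbot (sq_hid u) = hid (vtgt u);
  sq_hid_lft : forall u, slft (sq_hid u) = u;
  sq_hid_rgt : forall u, srgt (sq_hid u) = u;
  sq_vid_top : forall f, stop (sq_vid f) = f;
  sq_vid_bot : forall f, sbot (sq_vid f) = f;
  sq_vid_lft : forall f, slft (sq_vid f) = vid (hsrc f);
  sq_vid_rgt : forall f, srgt (sq_vid f) = vid (htgt f);
  sq_hcomp_top : forall a b, srgt a = slft b -> stop (sq_hcomp a b) = hcomp (stop a) (stop b);
  sq_hcomp_bot : forall a b, srgt a = slft b -> sbot (sq_hcomp a b) = hcomp (sbot a) (sbot b);
  sq_hcomp_lft : forall a b, srgt a = slft b -> slft (sq_hcomp a b) = slft a;
  sq_hcomp_rgt : forall a b, srgt a = slft b -> srgt (sq_hcomp a b) = srgt b;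
  sq_vcomp_top : forall a b, sbot a = stop b -> stop (sq_vcomp a b) = stop a;
  sq_vcomp_bot : forall a b, sbot a = stop b -> sbot (sq_vcomp a b) = sbot b;
  sq_vcomp_lft : forall a b, sbot a = stop b -> slft (sq_vcomp a b) = vcomp (slft a) (slft b);
  sq_vcomp_rgt : forall a b, sbot a = stop b -> srgt (sq_vcomp a b) = vcomp (srgt a) (srgt b);
  sq_hcomp_id_l : forall a, sq_hcomp (sq_hid (slft a)) a = a;
  sq_hcomp_id_r : forall a, sq_hcomp a (sq_hid (srgt a)) = a;
  sq_vcomp_id_l : forall a, sq_vcomp (sq_vid (stop a)) a = a;
  sq_vcomp_id_r : forall a, sq_vcomp a (sq_vid (sbot a)) = a;
  sq_hcomp_assoc : forall a b c, srgt a = slft b -> srgt b = slft c ->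
      sq_hcomp (sq_hcomp a b) c = sq_hcomp a (sq_hcomp b c);
  sq_vcomp_assoc : forall a b c, sbot a = stop b -> sbot b = stop c ->
      sq_vcomp (sq_vcomp a b) c = sq_vcomp a (sq_vcomp b c);
  sq_interchange : forall a b c d, srgt a = slft b -> srgt c = slft d ->
      sbot a = stop c -> sbot b = stop d ->
      sq_vcomp (sq_hcomp a b) (sq_hcomp c d) = sq_hcomp (sq_vcomp a c) (sq_vcomp b d);
  sq_vid_hcomp : forall f g, htgt f = hsrc g ->
      sq_vid (hcomp f g) = sq_hcomp (sq_vid f) (sq_vid g);
  sq_hid_vcomp : forall u v, vtgt u = vsrc v ->
      sq_hid (vcomp u v) = sq_vcomp (sq_hid u) (sq_hid v);
  sq_vid_hid : forall X, sq_vid (hid X) = sq_hid (vid X)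
}.

Arguments hsrc {_} _. Arguments htgt {_} _. Arguments hid {_} _. Arguments hcomp {_} _ _.
Arguments vsrc {_} _. Arguments vtgt {_} _. Arguments vid {_} _. Arguments vcomp {_} _ _.
Arguments stop {_} _. Arguments sbot {_} _. Arguments slft {_} _. Arguments srgt {_} _.
Arguments sq_hid {_} _. Arguments sq_vid {_} _.
Arguments sq_hcomp {_} _ _. Arguments sq_vcomp {_} _ _.

Record DoubleFunctor (A B : DoubleCat) : Type := {
  Fob : ob A -> ob B;
  Fhom : hom A -> hom B;
  Fver : ver A -> ver B;
  Fsq : sq A -> sq B;
  F_hsrc : forall f, hsrc (Fhom f) = Fob (hsrc f);
  F_htgt : forall f, htgt (Fhom f) = Fob (htgt f);
  F_vsrc : forall u, vsrc (Fver u) = Fob (vsrc u);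
  F_vtgt : forall u, vtgt (Fver u) = Fob (vtgt u);
  F_stop : forall a, stop (Fsq a) = Fhom (stop a);
  F_sbot : forall a, sbot (Fsq a) = Fhom (sbot a);
  F_slft : forall a, slft (Fsq a) = Fver (slft a);
  F_srgt : forall a, srgt (Fsq a) = Fver (srgt a);
  F_hid : forall X, Fhom (hid X) = hid (Fob X);
  F_vid : forall X, Fver (vid X) = vid (Fob X);
  F_sq_hid : forall u, Fsq (sq_hid u) = sq_hid (Fver u);
  F_sq_vid : forall f, Fsq (sq_vid f) = sq_vid (Fhom f);
  F_hcomp : forall f g, htgt f = hsrc g -> Fhom (hcomp f g) = hcomp (Fhom f) (Fhom g);
  F_vcomp : forall u v, vtgt u = vsrc v -> Fver (vcomp u v) = vcomp (Fver u) (Fver v);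
  F_sq_hcomp : forall a b, srgt a = slft b -> Fsq (sq_hcomp a b) = sq_hcomp (Fsq a) (Fsq b);
  F_sq_vcomp : forall a b, sbot a = stop b -> Fsq (sq_vcomp a b) = sq_vcomp (Fsq a) (Fsq b)
}.

Arguments Fob {_ _} _ _. Arguments Fhom {_ _} _ _. Arguments Fver {_ _} _ _.
Arguments Fsq {_ _} _ _.

(* 2-categories (the data used by the notions of equivalence, invertible     *)
(* 2-cell and Lack fibration).  1-cell composition diagrammatic; vertical     *)
(* composition of 2-cells only for composable pairs.                          *)

Record TwoCat : Type := {
  tob : Type;
  tmor : Type; tsrc : tmor -> tob; ttgt : tmor -> tob;
  tidm : tob -> tmor; tcomp : tmor -> tmor -> tmor;
  tcell : Type; csrc : tcell -> tmor; ctgt : tcell -> tmor;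
  cid : tmor -> tcell;
  ccomp : forall s t : tcell, ctgt s = csrc t -> tcell
}.

Arguments tsrc {_} _. Arguments ttgt {_} _. Arguments tidm {_} _. Arguments tcomp {_} _ _.
Arguments csrc {_} _. Arguments ctgt {_} _. Arguments cid {_} _. Arguments ccomp {_} _ _ _.

Record TwoFunctor (C D : TwoCat) : Type := {
  G0 : tob C -> tob D;
  G1 : tmor C -> tmor D;
  G2 : tcell C -> tcell D
}.
Arguments G0 {_ _} _ _. Arguments G1 {_ _} _ _. Arguments G2 {_ _} _ _.

Definition invertible2 (C : TwoCat) (s : tcell C) : Prop :=
  exists t : tcell C, exists (h1 : ctgt s = csrc t) (h2 : ctgt t = csrc s),
    ccomp s t h1 = cid (csrc s) /\ ccomp t s h2 = cid (ctgt s).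

Definition is_equivalence (C : TwoCat) (f : tmor C) : Prop :=
  exists g : tmor C, tsrc g = ttgt f /\ ttgt g = tsrc f /\
    (exists eta : tcell C, invertible2 eta /\ csrc eta = tidm (tsrc f) /\ ctgt eta = tcomp f g) /\
    (exists eps : tcell C, invertible2 eps /\ csrc eps = tcomp g f /\ ctgt eps = tidm (ttgt f)).

Definition lack_fibration (C D : TwoCat) (G : TwoFunctor C D) : Prop :=
  (forall (b : tmor D) (Cc : tob C), is_equivalence b -> ttgt b = G0 G Cc ->
     exists a : tmor C, is_equivalence a /\ ttgt a = Cc /\ G1 G a = b) /\
  (forall (c : tmor C) (beta : tcell D), invertible2 beta -> ctgt beta = G1 G c ->
     exists alpha : tcell C, invertible2 alpha /\ ctgt alpha = c /\ G2 G alpha = beta).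

Section HorizontalTwoCat.
Variable D : DoubleCat.

Definition Hcell : Type :=
  { a : sq D | slft a = vid (hsrc (stop a)) /\ srgt a = vid (htgt (stop a)) }.

Lemma vid_vid (X : ob D) : vcomp (vid X) (vid X) = vid X.
Proof.
  pose proof (@vcomp_id_l D (vid X)) as H. rewrite (@vsrc_vid D X) in H. exact H.
Qed.

Lemma Hcell_vid (f : hom D) :
  slft (sq_vid f) = vid (hsrc (stop (sq_vid f))) /\
  srgt (sq_vid f) = vid (htgt (stop (sq_vid f))).
Proof.
  rewrite (@sq_vid_top D f). split; [apply sq_vid_lft | apply sq_vid_rgt].
Qed.

Lemma Hcell_comp (s t : Hcell) (h : sbot (proj1_sig s) = stop (proj1_sig t)) :
  slft (sq_vcomp (proj1_sig s) (proj1_sig t)) = vid (hsrc (stop (sq_vcomp (proj1_sig s) (proj1_sig t)))) /\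
  srgt (sq_vcomp (proj1_sig s) (proj1_sig t)) = vid (htgt (stop (sq_vcomp (proj1_sig s) (proj1_sig t)))).
Proof.
  destruct s as [s [Hs1 Hs2]]; destruct t as [t [Ht1 Ht2]]; simpl in *.
  rewrite (@sq_vcomp_lft D s t h), (@sq_vcomp_rgt D s t h), (@sq_vcomp_top D s t h).
  rewrite Hs1, Hs2, Ht1, Ht2.
  assert (E1 : hsrc (stop t) = hsrc (stop s)).
  { rewrite <- h, (@sbot_hsrc D s), Hs1, (@vtgt_vid D). reflexivity. }
  assert (E2 : htgt (stop t) = htgt (stop s)).
  { rewrite <- h, (@sbot_htgt D s), Hs2, (@vtgt_vid D). reflexivity. }
  rewrite E1, E2, !vid_vid. split; reflexivity.
Qed.

Definition Hccomp (s t : Hcell) (h : sbot (proj1_sig s) = stop (proj1_sig t)) : Hcell :=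
  exist _ (sq_vcomp (proj1_sig s) (proj1_sig t)) (@Hcell_comp s t h).

Definition HTwoCat : TwoCat := {|
  tob := ob D; tmor := hom D; tsrc := @hsrc D; ttgt := @htgt D;
  tidm := @hid D; tcomp := @hcomp D;
  tcell := Hcell;
  csrc := fun s => stop (proj1_sig s);
  ctgt := fun s => sbot (proj1_sig s);
  cid := fun f => exist _ (sq_vid f) (Hcell_vid f);
  ccomp := Hccomp
|}.

End HorizontalTwoCat.

Section VerticalTwoCat.
Variable D : DoubleCat.

Record VCell : Type := {
  vc_src : sq D; vc_tgt : sq D; vc_s0 : sq D; vc_s1 : sq D;
  vc_lft : slft vc_src = slft vc_tgt;
  vc_rgt : srgt vc_src = srgt vc_tgt;
  vc_s0_top : stop vc_s0 = stop vc_src;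
  vc_s0_bot : sbot vc_s0 = stop vc_tgt;
  vc_s0_lft : slft vc_s0 = vid (hsrc (stop vc_src));
  vc_s0_rgt : srgt vc_s0 = vid (htgt (stop vc_src));
  vc_s1_top : stop vc_s1 = sbot vc_src;
  vc_s1_bot : sbot vc_s1 = sbot vc_tgt;
  vc_s1_lft : slft vc_s1 = vid (hsrc (sbot vc_src));
  vc_s1_rgt : srgt vc_s1 = vid (htgt (sbot vc_src));
  vc_eq : sq_vcomp vc_s0 vc_tgt = sq_vcomp vc_src vc_s1
}.

Definition Vcid (a : sq D) : VCell.
Proof.
  refine {| vc_src := a; vc_tgt := a; vc_s0 := sq_vid (stop a); vc_s1 := sq_vid (sbot a) |}.
  all: try reflexivity.
  all: try apply sq_vid_top; try apply sq_vid_bot; try apply sq_vid_lft; try apply sq_vid_rgt.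
  rewrite (@sq_vcomp_id_l D a), (@sq_vcomp_id_r D a). reflexivity.
Defined.

Definition Vccomp (s t : VCell) (h : vc_tgt s = vc_src t) : VCell.
Proof.
  destruct s as [as_ bs s0 s1 Hl Hr H0t H0b H0l H0r H1t H1b H1l H1r Heq];
  destruct t as [at_ bt t0 t1 Kl Kr K0t K0b K0l K0r K1t K1b K1l K1r Keq]; simpl in h.
  subst at_.
  assert (k0 : sbot s0 = stop t0) by congruence.
  assert (k1 : sbot s1 = stop t1) by congruence.
  assert (E0 : hsrc (stop bs) = hsrc (stop as_)).
  { rewrite <- H0b, (@sbot_hsrc D), H0l, (@vtgt_vid D). reflexivity. }
  assert (E0' : htgt (stop bs) = htgt (stop as_)).
  { rewrite <- H0b, (@sbot_htgt D), H0r, (@vtgt_vid D). reflexivity. }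
  assert (E1 : hsrc (sbot bs) = hsrc (sbot as_)).
  { rewrite <- H1b, (@sbot_hsrc D), H1l, (@vtgt_vid D). reflexivity. }
  assert (E1' : htgt (sbot bs) = htgt (sbot as_)).
  { rewrite <- H1b, (@sbot_htgt D), H1r, (@vtgt_vid D). reflexivity. }
  refine {| vc_src := as_; vc_tgt := bt; vc_s0 := sq_vcomp s0 t0; vc_s1 := sq_vcomp s1 t1 |}.
  - congruence.
  - congruence.
  - rewrite (@sq_vcomp_top D _ _ k0). exact H0t.
  - rewrite (@sq_vcomp_bot D _ _ k0). exact K0b.
  - rewrite (@sq_vcomp_lft D _ _ k0), H0l, K0l, E0, vid_vid. reflexivity.
  - rewrite (@sq_vcomp_rgt D _ _ k0), H0r, K0r, E0', vid_vid. reflexivity.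
  - rewrite (@sq_vcomp_top D _ _ k1). exact H1t.
  - rewrite (@sq_vcomp_bot D _ _ k1). exact K1b.
  - rewrite (@sq_vcomp_lft D _ _ k1), H1l, K1l, E1, vid_vid. reflexivity.
  - rewrite (@sq_vcomp_rgt D _ _ k1), H1r, K1r, E1', vid_vid. reflexivity.
  - rewrite (@sq_vcomp_assoc D _ _ _ k0 K0b), Keq.
    rewrite <- (@sq_vcomp_assoc D _ _ _ H0b).
    + rewrite Heq, (@sq_vcomp_assoc D _ _ _ (eq_sym H1t)). reflexivity.
      congruence.
    + congruence.
Defined.

Definition VTwoCat : TwoCat := {|
  tob := ver D; tmor := sq D; tsrc := @slft D; ttgt := @srgt D;
  tidm := @sq_hid D; tcomp := @sq_hcomp D;
  tcell := VCell; csrc := vc_src; ctgt := vc_tgt;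
  cid := Vcid; ccomp := Vccomp
|}.

End VerticalTwoCat.

Section InducedTwoFunctors.
Variables (A B : DoubleCat) (F : DoubleFunctor A B).

Lemma HF_cell (s : Hcell A) :
  slft (Fsq F (proj1_sig s)) = vid (hsrc (stop (Fsq F (proj1_sig s)))) /\
  srgt (Fsq F (proj1_sig s)) = vid (htgt (stop (Fsq F (proj1_sig s)))).
Proof.
  destruct s as [s [H1 H2]]; simpl.
  rewrite (F_slft F), (F_srgt F), (F_stop F), (F_hsrc F), (F_htgt F), H1, H2, !(F_vid F).
  split; reflexivity.
Qed.

Definition HF : TwoFunctor (HTwoCat A) (HTwoCat B) :=
  @Build_TwoFunctor (HTwoCat A) (HTwoCat B) (Fob F) (Fhom F)
    (fun s : Hcell A => exist _ (Fsq F (proj1_sig s)) (HF_cell s) : Hcell B).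

Definition VF_cell (s : VCell A) : VCell B.
Proof.
  destruct s as [a b s0 s1 Hl Hr H0t H0b H0l H0r H1t H1b H1l H1r Heq].
  refine {| vc_src := Fsq F a; vc_tgt := Fsq F b; vc_s0 := Fsq F s0; vc_s1 := Fsq F s1 |}.
  - rewrite !(F_slft F), Hl. reflexivity.
  - rewrite !(F_srgt F), Hr. reflexivity.
  - rewrite !(F_stop F), H0t. reflexivity.
  - rewrite (F_sbot F), (F_stop F), H0b. reflexivity.
  - rewrite (F_slft F), (F_stop F), (F_hsrc F), H0l, (F_vid F). reflexivity.
  - rewrite (F_srgt F), (F_stop F), (F_htgt F), H0r, (F_vid F). reflexivity.
  - rewrite (F_stop F), (F_sbot F), H1t. reflexivity.
  - rewrite !(F_sbot F), H1b. reflexivity.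
  - rewrite (F_slft F), (F_sbot F), (F_hsrc F), H1l, (F_vid F). reflexivity.
  - rewrite (F_srgt F), (F_sbot F), (F_htgt F), H1r, (F_vid F). reflexivity.
  - rewrite <- (F_sq_vcomp F H0b), <- (F_sq_vcomp F (eq_sym H1t)), Heq. reflexivity.
Defined.

Definition VF : TwoFunctor (VTwoCat A) (VTwoCat B) :=
  @Build_TwoFunctor (VTwoCat A) (VTwoCat B) (Fver F) (Fsq F) VF_cell.

End InducedTwoFunctors.

Definition horizontal_equivalence (D : DoubleCat) (f : hom D) : Prop :=
  @is_equivalence (HTwoCat D) f.

Definition vertically_invertible (D : DoubleCat) (a : sq D) : Prop :=
  exists b : sq D, sbot a = stop b /\ sbot b = stop a /\
    sq_vcomp a b = sq_vid (stop a) /\ sq_vcomp b a = sq_vid (sbot a).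

Definition weakly_horizontally_invertible (D : DoubleCat) (a : sq D) : Prop :=
  @is_equivalence (VTwoCat D) a.

Definition double_fibration (A B : DoubleCat) (F : DoubleFunctor A B) : Prop :=
  (* (df1) *)
  (forall (b : hom B) (C : ob A), horizontal_equivalence b -> htgt b = Fob F C ->
     exists a : hom A, horizontal_equivalence a /\ htgt a = C /\ Fhom F a = b) /\
  (* (df2) *)
  (forall (c : hom A) (beta : sq B), vertically_invertible beta ->
     slft beta = vid (Fob F (hsrc c)) -> srgt beta = vid (Fob F (htgt c)) ->
     sbot beta = Fhom F c ->
     exists alpha : sq A, vertically_invertible alpha /\
       slft alpha = vid (hsrc c) /\ srgt alpha = vid (htgt c) /\ sbot alpha = c /\
       Fsq F alpha = beta) /\
  (* (df3) *)
  (forall (u' : ver A) (beta : sq B), weakly_horizontally_invertible beta ->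
     srgt beta = Fver F u' ->
     exists alpha : sq A, weakly_horizontally_invertible alpha /\ srgt alpha = u' /\
       Fsq F alpha = beta).

(* Clause (df1) is literally clause (f1) for H F, and clause (df3) is clause (f1)
   for V F, so everything hinges on (df2), the lifting of vertically invertible
   globular squares.  Finally (df2) is shown equivalent to (f2) for H F
   (invertible 2-cells of H D are the vertically invertible globular squares)
   and to imply (f2) for V F (lift the components of an invertible 2-cell and
   conjugate), from which the theorem follows by matching clauses. *)

From Stdlib Require Import ProofIrrelevance.

Section GlobularSquares.
Context {D : DoubleCat}.

(* A square is globular when both vertical sides are identities; these are the
   2-cells of the horizontal 2-category [HTwoCat D]. *)
Definition globular (a : sq D) : Prop :=
  slft a = vid (hsrc (stop a)) /\ srgt a = vid (htgt (stop a)).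

Definition vinverse (a b : sq D) : Prop :=
  sbot a = stop b /\ sbot b = stop a /\
  sq_vcomp a b = sq_vid (stop a) /\ sq_vcomp b a = sq_vid (sbot a).

Lemma globular_hsrc {a : sq D} : globular a -> hsrc (sbot a) = hsrc (stop a).
Proof.
  intros [l _]. rewrite sbot_hsrc, stop_hsrc, l, vtgt_vid, vsrc_vid. reflexivity.
Qed.

Lemma globular_htgt {a : sq D} : globular a -> htgt (sbot a) = htgt (stop a).
Proof.
  intros [_ r]. rewrite sbot_htgt, stop_htgt, r, vtgt_vid, vsrc_vid. reflexivity.
Qed.

Lemma globular_of_sides {a : sq D} {X Y : ob D} :
  slft a = vid X -> srgt a = vid Y -> globular a.
Proof.
  intros l r. unfold globular. rewrite stop_hsrc, stop_htgt, l, r, !vsrc_vid. auto.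
Qed.

Lemma globular_sides {a : sq D} :
  globular a -> slft a = vid (hsrc (sbot a)) /\ srgt a = vid (htgt (sbot a)).
Proof.
  intros G. rewrite (globular_hsrc G), (globular_htgt G). exact G.
Qed.

Lemma vcomp_globular_l {g a : sq D} : globular g -> sbot g = stop a ->
  slft (sq_vcomp g a) = slft a /\ srgt (sq_vcomp g a) = srgt a.
Proof.
  intros G h. rewrite (sq_vcomp_lft h), (sq_vcomp_rgt h), (proj1 G), (proj2 G).
  rewrite <- (globular_hsrc G), <- (globular_htgt G), h, stop_hsrc, stop_htgt.
  rewrite !vcomp_id_l. auto.
Qed.

Lemma vcomp_globular_r {a g : sq D} : globular g -> sbot a = stop g ->
  slft (sq_vcomp a g) = slft a /\ srgt (sq_vcomp a g) = srgt a.
Proof.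
  intros G h. rewrite (sq_vcomp_lft h), (sq_vcomp_rgt h), (proj1 G), (proj2 G).
  rewrite <- h, sbot_hsrc, sbot_htgt, !vcomp_id_r. auto.
Qed.

Lemma vinverse_globular {a b : sq D} : vinverse a b -> globular a -> globular b.
Proof.
  intros [h1 [_ [e _]]] G.
  destruct (vcomp_globular_l G h1) as [l r].
  rewrite e, sq_vid_lft in l. rewrite e, sq_vid_rgt in r.
  unfold globular. rewrite <- h1, (globular_hsrc G), (globular_htgt G). auto.
Qed.

End GlobularSquares.

Section VerticalCells.
Context {D : DoubleCat}.

Lemma VCell_eq (s t : VCell D) : vc_src s = vc_src t -> vc_tgt s = vc_tgt t ->
  vc_s0 s = vc_s0 t -> vc_s1 s = vc_s1 t -> s = t.
Proof.
  destruct s, t; simpl; intros; subst; f_equal; apply proof_irrelevance.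
Qed.

Lemma Vccomp_src (s t : VCell D) (h : vc_tgt s = vc_src t) : vc_src (Vccomp h) = vc_src s.
Proof. destruct s, t; simpl in *; subst; reflexivity. Qed.

Lemma Vccomp_tgt (s t : VCell D) (h : vc_tgt s = vc_src t) : vc_tgt (Vccomp h) = vc_tgt t.
Proof. destruct s, t; simpl in *; subst; reflexivity. Qed.

Lemma Vccomp_s0 (s t : VCell D) (h : vc_tgt s = vc_src t) :
  vc_s0 (Vccomp h) = sq_vcomp (vc_s0 s) (vc_s0 t).
Proof. destruct s, t; simpl in *; subst; reflexivity. Qed.

Lemma Vccomp_s1 (s t : VCell D) (h : vc_tgt s = vc_src t) :
  vc_s1 (Vccomp h) = sq_vcomp (vc_s1 s) (vc_s1 t).
Proof. destruct s, t; simpl in *; subst; reflexivity. Qed.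

Lemma VCell_s0_globular (s : VCell D) : globular (vc_s0 s).
Proof. unfold globular. rewrite vc_s0_top. exact (conj (vc_s0_lft s) (vc_s0_rgt s)). Qed.

Lemma VCell_s1_globular (s : VCell D) : globular (vc_s1 s).
Proof. unfold globular. rewrite vc_s1_top. exact (conj (vc_s1_lft s) (vc_s1_rgt s)). Qed.

(* In a 2-cell with globular components, the two squares automatically have the
   same vertical sides: both are the sides of [s0 ; tgt = src ; s1]. *)
Lemma cell_sides {src tgt s0 s1 : sq D} :
  globular s0 -> globular s1 -> sbot s0 = stop tgt -> stop s1 = sbot src ->
  sq_vcomp s0 tgt = sq_vcomp src s1 ->
  slft src = slft tgt /\ srgt src = srgt tgt.
Proof.
  intros G0 G1 b0 t1 e.
  destruct (vcomp_globular_l G0 b0) as [l0 r0].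
  destruct (vcomp_globular_r G1 (eq_sym t1)) as [l1 r1].
  rewrite <- l0, <- r0, <- l1, <- r1, e. auto.
Qed.

Definition mkVCell (src tgt s0 s1 : sq D) (G0 : globular s0) (G1 : globular s1)
  (t0 : stop s0 = stop src) (b0 : sbot s0 = stop tgt)
  (t1 : stop s1 = sbot src) (b1 : sbot s1 = sbot tgt)
  (e : sq_vcomp s0 tgt = sq_vcomp src s1) : VCell D.
Proof.
  refine {| vc_src := src; vc_tgt := tgt; vc_s0 := s0; vc_s1 := s1; vc_eq := e |}.
  - exact (proj1 (cell_sides G0 G1 b0 t1 e)).
  - exact (proj2 (cell_sides G0 G1 b0 t1 e)).
  - exact t0.
  - exact b0.
  - rewrite <- t0. exact (proj1 G0).
  - rewrite <- t0. exact (proj2 G0).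
  - exact t1.
  - exact b1.
  - rewrite <- t1. exact (proj1 G1).
  - rewrite <- t1. exact (proj2 G1).
Defined.

Lemma VCell_src_eq {s : VCell D} {i : sq D} :
  vinverse (vc_s1 s) i -> vc_src s = sq_vcomp (vc_s0 s) (sq_vcomp (vc_tgt s) i).
Proof.
  intros [h1 [_ [e _]]].
  assert (k : sbot (vc_tgt s) = stop i) by (rewrite <- vc_s1_bot; exact h1).
  rewrite <- (sq_vcomp_assoc (vc_s0_bot s) k), vc_eq.
  rewrite (sq_vcomp_assoc (eq_sym (vc_s1_top s)) h1), e, vc_s1_top, sq_vcomp_id_r.
  reflexivity.
Qed.

Lemma VCell_invertible_components (s : VCell D) : @invertible2 (VTwoCat D) s ->
  vertically_invertible (vc_s0 s) /\ vertically_invertible (vc_s1 s).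
Proof.
  intros [t [h1 [h2 [e1 e2]]]]. simpl in h1, h2, e1, e2.
  pose proof (f_equal (@vc_s0 D) e1) as a1. pose proof (f_equal (@vc_s0 D) e2) as a2.
  pose proof (f_equal (@vc_s1 D) e1) as b1. pose proof (f_equal (@vc_s1 D) e2) as b2.
  rewrite Vccomp_s0 in a1, a2. rewrite Vccomp_s1 in b1, b2. simpl in a1, a2, b1, b2.
  rewrite h1 in a2, b2.
  split.
  - exists (vc_s0 t). rewrite !vc_s0_bot, !vc_s0_top, h1, h2. auto.
  - exists (vc_s1 t). rewrite !vc_s1_bot, !vc_s1_top, h1, h2. auto.
Qed.

Lemma VCell_invertible_of_components (s : VCell D) {i0 i1 : sq D} :
  vinverse (vc_s0 s) i0 -> vinverse (vc_s1 s) i1 -> @invertible2 (VTwoCat D) s.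
Proof.
  intros I0 I1.
  pose proof I0 as (p0 & q0 & e0 & f0). pose proof I1 as (p1 & q1 & e1 & f1).
  pose proof (vinverse_globular I0 (VCell_s0_globular s)) as G0.
  pose proof (vinverse_globular I1 (VCell_s1_globular s)) as G1.
  assert (k : sbot (vc_s0 s) = stop (sq_vcomp (vc_tgt s) i1)).
  { rewrite vc_s0_bot, sq_vcomp_top; [reflexivity|]. rewrite <- vc_s1_bot. exact p1. }
  assert (e : sq_vcomp i0 (vc_src s) = sq_vcomp (vc_tgt s) i1).
  { rewrite (VCell_src_eq I1), <- (sq_vcomp_assoc q0 k), f0, k, sq_vcomp_id_l.
    reflexivity. }
  pose (t := mkVCell (vc_tgt s) (vc_src s) i0 i1 G0 G1
    (eq_trans (eq_sym p0) (vc_s0_bot s)) (eq_trans q0 (vc_s0_top s))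
    (eq_trans (eq_sym p1) (vc_s1_bot s)) (eq_trans q1 (vc_s1_top s)) e).
  exists t, eq_refl, eq_refl. cbn [ccomp cid csrc ctgt VTwoCat]. split; apply VCell_eq.
  all: rewrite ?Vccomp_src, ?Vccomp_tgt, ?Vccomp_s0, ?Vccomp_s1; simpl; try reflexivity.
  - rewrite e0, vc_s0_top. reflexivity.
  - rewrite e1, vc_s1_top. reflexivity.
  - rewrite f0, vc_s0_bot. reflexivity.
  - rewrite f1, vc_s1_bot. reflexivity.
Qed.

End VerticalCells.

Section Conjugation.
Context {D : DoubleCat}.

Lemma conjugate_cell (c : sq D) {a0 i0 a1 i1 : sq D} :
  globular a0 -> globular a1 -> vinverse a0 i0 -> vinverse a1 i1 ->
  sbot a0 = stop c -> sbot a1 = sbot c ->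
  exists alpha : VCell D, @invertible2 (VTwoCat D) alpha /\
    vc_src alpha = sq_vcomp a0 (sq_vcomp c i1) /\ vc_tgt alpha = c /\
    vc_s0 alpha = a0 /\ vc_s1 alpha = a1.
Proof.
  intros G0 G1 I0 I1 b0 b1. pose proof I1 as (p1 & q1 & _ & f1).
  assert (kc : sbot c = stop i1) by (rewrite <- b1; exact p1).
  assert (k : sbot a0 = stop (sq_vcomp c i1)) by (rewrite (sq_vcomp_top kc); exact b0).
  assert (bc : sbot (sq_vcomp c i1) = stop a1) by (rewrite (sq_vcomp_bot kc); exact q1).
  assert (t0 : stop a0 = stop (sq_vcomp a0 (sq_vcomp c i1))) by exact (eq_sym (sq_vcomp_top k)).
  assert (t1 : stop a1 = sbot (sq_vcomp a0 (sq_vcomp c i1))) by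
    (rewrite (sq_vcomp_bot k); exact (eq_sym bc)).
  assert (e : sq_vcomp a0 c = sq_vcomp (sq_vcomp a0 (sq_vcomp c i1)) a1).
  { rewrite (sq_vcomp_assoc k bc), (sq_vcomp_assoc kc q1), f1, b1, sq_vcomp_id_r.
    reflexivity. }
  pose (alpha := mkVCell (sq_vcomp a0 (sq_vcomp c i1)) c a0 a1 G0 G1 t0 b0 t1 b1 e).
  exists alpha. repeat split. exact (VCell_invertible_of_components alpha I0 I1).
Qed.

End Conjugation.

Section InducedTwoFunctors.
Context {A B : DoubleCat} (F : DoubleFunctor A B).

Lemma Fsq_vinverse {a b : sq A} : vinverse a b -> vinverse (Fsq F a) (Fsq F b).
Proof.
  intros (p & q & e & f). unfold vinverse.
  rewrite <- (F_sq_vcomp F p), <- (F_sq_vcomp F q), e, f, !F_sq_vid, !F_stop, !F_sbot, p, q.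
  auto.
Qed.

Lemma VF_cell_src (s : VCell A) : vc_src (VF_cell F s) = Fsq F (vc_src s).
Proof. destruct s; reflexivity. Qed.
Lemma VF_cell_tgt (s : VCell A) : vc_tgt (VF_cell F s) = Fsq F (vc_tgt s).
Proof. destruct s; reflexivity. Qed.
Lemma VF_cell_s0 (s : VCell A) : vc_s0 (VF_cell F s) = Fsq F (vc_s0 s).
Proof. destruct s; reflexivity. Qed.
Lemma VF_cell_s1 (s : VCell A) : vc_s1 (VF_cell F s) = Fsq F (vc_s1 s).
Proof. destruct s; reflexivity. Qed.

End InducedTwoFunctors.

Lemma Hcell_invertible_iff {D : DoubleCat} (s : Hcell D) :
  @invertible2 (HTwoCat D) s <-> vertically_invertible (proj1_sig s).
Proof.
  split.
  - intros [t [h1 [h2 [e1 e2]]]]. exists (proj1_sig t).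
    apply (f_equal (@proj1_sig _ _)) in e1, e2. simpl in h1, h2, e1, e2. auto.
  - destruct s as [a G]. intros [b I]. simpl in I.
    exists (exist _ b (vinverse_globular I G)). destruct I as (h1 & h2 & e1 & e2).
    exists h1, h2.
    split; apply eq_sig_hprop; try (intros; apply proof_irrelevance); simpl.
    + exact e1.
    + rewrite e2, h1. reflexivity.
Qed.

(* Clause (f2) of a Lack fibration: invertible 2-cells into the image of a
   1-cell lift to invertible 2-cells into that 1-cell. *)
Definition lifts_invertible_2cells {C E : TwoCat} (G : TwoFunctor C E) : Prop :=
  forall (c : tmor C) (beta : tcell E), invertible2 beta -> ctgt beta = G1 G c ->
    exists alpha : tcell C, invertible2 alpha /\ ctgt alpha = c /\ G2 G alpha = beta.

Section Lifting.
Context {A B : DoubleCat} (F : DoubleFunctor A B).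

Definition lifts_vertically_invertible_squares : Prop :=
  forall (c : hom A) (beta : sq B), vertically_invertible beta ->
    slft beta = vid (Fob F (hsrc c)) -> srgt beta = vid (Fob F (htgt c)) ->
    sbot beta = Fhom F c ->
    exists alpha : sq A, vertically_invertible alpha /\
      slft alpha = vid (hsrc c) /\ srgt alpha = vid (htgt c) /\ sbot alpha = c /\
      Fsq F alpha = beta.

Lemma lift_globular : lifts_vertically_invertible_squares ->
  forall (c : hom A) (beta : sq B), vertically_invertible beta -> globular beta ->
    sbot beta = Fhom F c ->
    exists alpha : sq A, vertically_invertible alpha /\ globular alpha /\
      sbot alpha = c /\ Fsq F alpha = beta.
Proof.
  intros L c b vb gb hb. destruct (globular_sides gb) as [l r].
  rewrite hb, F_hsrc in l. rewrite hb, F_htgt in r.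
  destruct (L c b vb l r hb) as (a & va & la & ra & ba & Fa).
  exists a. split; [exact va | split; [exact (globular_of_sides la ra) | auto]].
Qed.

Lemma HF_lifting_iff :
  lifts_vertically_invertible_squares <-> lifts_invertible_2cells (HF F).
Proof.
  split.
  - intros L c [b gb] Ib hb. simpl in hb. apply Hcell_invertible_iff in Ib.
    destruct (lift_globular L c b Ib gb hb) as (a & va & ga & ba & Fa).
    exists (exist _ a ga). repeat split.
    + apply Hcell_invertible_iff. exact va.
    + exact ba.
    + apply eq_sig_hprop; [intros; apply proof_irrelevance | exact Fa].
  - intros L c b vb l r hb.
    destruct (L c (exist _ b (globular_of_sides l r))) as ([a ga] & Ia & ba & Fa).
    + apply Hcell_invertible_iff. exact vb.
    + exact hb.
    + apply Hcell_invertible_iff in Ia. apply (f_equal (@proj1_sig _ _)) in Fa.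
      simpl in Ia, ba, Fa. destruct (globular_sides ga) as [la ra].
      rewrite ba in la, ra. exists a. auto.
Qed.

(* (df2) implies clause (f2) for [VF F]: lift the two components of an
   invertible 2-cell [beta : b => F c] to [a0], [a1] by (df2), and take the
   conjugate 2-cell [a0 ; c ; a1^-1 => c]; its image is [beta] because [b] is
   itself [s0 ; F c ; s1^-1]. *)
Lemma VF_lifting : lifts_vertically_invertible_squares -> lifts_invertible_2cells (VF F).
Proof.
  intros L c beta Ib hb. simpl in c, beta, hb |- *.
  destruct (VCell_invertible_components beta Ib) as [v0 v1].
  assert (b0 : sbot (vc_s0 beta) = Fhom F (stop c)) by (rewrite vc_s0_bot, hb; apply F_stop).
  assert (b1 : sbot (vc_s1 beta) = Fhom F (sbot c)) by (rewrite vc_s1_bot, hb; apply F_sbot).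
  destruct (lift_globular L _ _ v0 (VCell_s0_globular beta) b0) as (a0 & [i0 I0] & g0 & ba0 & Fa0).
  destruct (lift_globular L _ _ v1 (VCell_s1_globular beta) b1) as (a1 & [i1 I1] & g1 & ba1 & Fa1).
  destruct (conjugate_cell c g0 g1 I0 I1 ba0 ba1) as (alpha & Ia & src & tgt & s0 & s1).
  exists alpha. repeat split; auto.
  apply VCell_eq; rewrite ?VF_cell_src, ?VF_cell_tgt, ?VF_cell_s0, ?VF_cell_s1.
  - pose proof (Fsq_vinverse F I1) as FI1. rewrite Fa1 in FI1.
    assert (kc : sbot c = stop i1) by (rewrite <- ba1; exact (proj1 I1)).
    assert (k : sbot a0 = stop (sq_vcomp c i1)) by (rewrite (sq_vcomp_top kc); exact ba0).
    rewrite src, (VCell_src_eq FI1), <- Fa0, hb, (F_sq_vcomp F k), (F_sq_vcomp F kc).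
    reflexivity.
  - rewrite tgt. symmetry. exact hb.
  - rewrite s0. exact Fa0.
  - rewrite s1. exact Fa1.
Qed.

End Lifting.

Theorem proposition3p13 (A B : DoubleCat) (F : DoubleFunctor A B) :
  double_fibration F <-> lack_fibration (HF F) /\ lack_fibration (VF F).
Proof.
  split.
  - intros (df1 & df2 & df3). split; split.
    + exact df1.
    + apply HF_lifting_iff. exact df2.
    + intros b C hb e. exact (df3 C b hb e).
    + apply VF_lifting. exact df2.
  - intros [[h1 h2] [v1 _]]. split; [exact h1 | split].
    + apply HF_lifting_iff. exact h2.
    + intros u b hb e. exact (v1 b u hb e).
Qed.
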